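(* Let $\mathbb{B}$ be a category with finite limits, in which every morphism is regarded as small, and let $\mathbf{C}=(C_0,C_1,d_0,d_1,c,i)$ be an internal category in $\mathbb{B}$. Then the externalization $\mathbf{proj}:\mathrm{Fam}(\mathbf{C})\to\mathbb{B}$ is a concrete fibration over $\mathbb{B}$.
   Context: An internal category consists of objects $C_0,C_1$, domain/codomain $d_0,d_1:C_1\to C_0$, composition $c:C_1\times_{C_0}C_1\to C_1$, identity $i:C_0\to C_1$ satisfying the usual axioms. $\mathrm{Fam}(\mathbf{C})$ has objects $(I,X)$ with $X:I\to C_0$, morphisms $(u,f):(I,X)\to(J,Y)$ with $u:I\to J$, $f:I\to C_1$, $d_0f=X$, $d_1f=Yu$, composition $(v,g)\circ(u,f)=(vu,c\circ\langle gu,f\rangle)$, identities $(\mathrm{id}_I,iX)$; $\mathbf{proj}(I,X)=I$ is a fibration (the externalization). A concrete fibration over $\mathbb{B}$ is a fibration $P:\mathbb{X}\to\mathbb{B}$ together with a faithful fibered functor $U$ over $\mathbb{B}$ from $P$ to the codomain fibration $\mathbf{cod}:\mathbb{B}^{\to}\to\mathbb{B}$ (so $U$ commutes with the projections to $\mathbb{B}$ and preserves cartesian morphisms), such that for every object $X$, $UX$ is a small morphism $|X|\to PX$, and $U$ sends each $f:X\to Y$ to a commuting square with top $|f|:|X|\to|Y|$ and bottom $Pf$. *)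

Set Implicit Arguments.
Unset Strict Implicit.

Record PreCat : Type := {
  ob :> Type;
  hom : ob -> ob -> Type;
  comp : forall a b c : ob, hom b c -> hom a b -> hom a c;
  idm : forall a : ob, hom a a }.

Notation "g ∘ f" := (comp g f) (at level 40, left associativity).

Record is_cat (C : PreCat) : Prop := {
  cat_assoc : forall (a b c d : C) (f : hom a b) (g : hom b c) (h : hom c d),
      h ∘ (g ∘ f) = (h ∘ g) ∘ f;
  cat_idl : forall (a b : C) (f : hom a b), idm b ∘ f = f;
  cat_idr : forall (a b : C) (f : hom a b), f ∘ idm a = f }.

Record Pullback (C : PreCat) (x y z : C) (f : hom x z) (g : hom y z) := {
  pb_ob :> C;
  pb1 : hom pb_ob x;
  pb2 : hom pb_ob y;
  pb_comm : f ∘ pb1 = g ∘ pb2;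
  pb_pair : forall (w : C) (a : hom w x) (b : hom w y), f ∘ a = g ∘ b -> hom w pb_ob;
  pb_pair1 : forall (w : C) (a : hom w x) (b : hom w y) (e : f ∘ a = g ∘ b),
      pb1 ∘ pb_pair e = a;
  pb_pair2 : forall (w : C) (a : hom w x) (b : hom w y) (e : f ∘ a = g ∘ b),
      pb2 ∘ pb_pair e = b;
  pb_uniq : forall (w : C) (h h' : hom w pb_ob),
      pb1 ∘ h = pb1 ∘ h' -> pb2 ∘ h = pb2 ∘ h' -> h = h' }.

Definition is_terminal (C : PreCat) (t : C) : Prop :=
  forall a : C, exists h : hom a t, forall h' : hom a t, h' = h.

Definition has_finite_limits (C : PreCat) : Prop :=
  (exists t : C, is_terminal t) /\
  (forall (x y z : C) (f : hom x z) (g : hom y z), inhabited (Pullback f g)).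

(** * Internal categories.
   d0 = domain, d1 = codomain.  C2 = C1 x_{C0} C1 is the pullback of d0 and d1:
   a generalized element k of C2 is a pair (g, f) = (pb1 k, pb2 k) with
   d0 g = d1 f, and icomp k is "g after f".  The unit and associativity laws
   are stated on generalized elements (equivalent to the usual diagrams). *)
Record InternalCat (B : PreCat) := {
  C0 : B;
  C1 : B;
  d0 : hom C1 C0;
  d1 : hom C1 C0;
  C2 : Pullback d0 d1;
  icomp : hom C2 C1;
  iid : hom C0 C1;
  icomp_d0 : d0 ∘ icomp = d0 ∘ pb2 C2;
  icomp_d1 : d1 ∘ icomp = d1 ∘ pb1 C2;
  iid_d0 : d0 ∘ iid = idm C0;
  iid_d1 : d1 ∘ iid = idm C0;
  icomp_unit_l : forall (w : B) (k : hom w C2),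
      pb1 C2 ∘ k = iid ∘ (d1 ∘ (pb2 C2 ∘ k)) -> icomp ∘ k = pb2 C2 ∘ k;
  icomp_unit_r : forall (w : B) (k : hom w C2),
      pb2 C2 ∘ k = iid ∘ (d0 ∘ (pb1 C2 ∘ k)) -> icomp ∘ k = pb1 C2 ∘ k;
  icomp_assoc : forall (w : B) (k1 k2 k3 k4 : hom w C2),
      (* k1 = (h,g), k3 = (g,f), k2 = (h.g, f), k4 = (h, g.f) *)
      pb2 C2 ∘ k1 = pb1 C2 ∘ k3 ->
      pb1 C2 ∘ k2 = icomp ∘ k1 -> pb2 C2 ∘ k2 = pb2 C2 ∘ k3 ->
      pb1 C2 ∘ k4 = pb1 C2 ∘ k1 -> pb2 C2 ∘ k4 = icomp ∘ k3 ->
      icomp ∘ k2 = icomp ∘ k4 }.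

Record PreFunctor (X Y : PreCat) := {
  fo :> X -> Y;
  fm : forall a b : X, hom a b -> hom (fo a) (fo b) }.

Record is_functor (X Y : PreCat) (F : PreFunctor X Y) : Prop := {
  fun_comp : forall (a b c : X) (g : hom b c) (f : hom a b),
      fm F (g ∘ f) = fm F g ∘ fm F f;
  fun_id : forall a : X, fm F (idm a) = idm (F a) }.

Definition faithful (X Y : PreCat) (F : PreFunctor X Y) : Prop :=
  forall (a b : X) (f g : hom a b), fm F f = fm F g -> f = g.

Definition cartesian (X B : PreCat) (P : PreFunctor X B) (x y : X) (f : hom x y)
  : Prop :=
  forall (z : X) (g : hom z y) (w : hom (P z) (P x)),
    fm P g = fm P f ∘ w ->
    exists h : hom z x, (f ∘ h = g /\ fm P h = w) /\
      (forall h' : hom z x, f ∘ h' = g -> fm P h' = w -> h' = h).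

Definition eq_hom (C : PreCat) (a b : C) (e : a = b) : hom a b :=
  match e in _ = b' return hom a b' with eq_refl => idm a end.

Definition is_fibration (X B : PreCat) (P : PreFunctor X B) : Prop :=
  is_functor P /\
  forall (y : X) (I : B) (u : hom I (P y)),
    exists (x : X) (f : hom x y) (e : P x = I),
      cartesian P f /\ fm P f = u ∘ eq_hom e.

Section Arrow.
Variables (B : PreCat) (HB : is_cat B).

Record ArrOb := { adom : B; acod : B; aarr : hom adom acod }.
Record ArrHom (a b : ArrOb) := {
  atop : hom (adom a) (adom b);
  abot : hom (acod a) (acod b);
  asq : aarr b ∘ atop = abot ∘ aarr a }.

Lemma arr_comp_sq (a b c : ArrOb) (g : ArrHom b c) (f : ArrHom a b) :
  aarr c ∘ (atop g ∘ atop f) = (abot g ∘ abot f) ∘ aarr a.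
Proof.
  rewrite (cat_assoc HB), (asq g), <- (cat_assoc HB), (asq f), (cat_assoc HB).
  reflexivity.
Qed.

Lemma arr_id_sq (a : ArrOb) : aarr a ∘ idm (adom a) = idm (acod a) ∘ aarr a.
Proof. rewrite (cat_idl HB), (cat_idr HB). reflexivity. Qed.

Definition ArrCat : PreCat :=
  {| ob := ArrOb; hom := ArrHom;
     comp := fun a b c g f => Build_ArrHom (arr_comp_sq g f);
     idm := fun a => Build_ArrHom (arr_id_sq a) |}.

Definition codF : PreFunctor ArrCat B :=
  {| fo := fun a : ArrCat => acod a; fm := fun a b (f : hom a b) => abot f |}.
End Arrow.

(** * Concrete fibrations (every morphism of B is small).
   A fibered functor U from P to cod commuting strictly with the projections
   is exactly: for each x an arrow |x| -> P x, and for each f a top arrow |f|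
   making the square with bottom P f commute. *)
Record ConcreteData (B : PreCat) (X : PreCat) (P : PreFunctor X B) := {
  carrier : X -> B;
  uarr : forall x : X, hom (carrier x) (P x);
  utop : forall x y : X, hom x y -> hom (carrier x) (carrier y);
  usq : forall (x y : X) (f : hom x y), uarr y ∘ utop f = fm P f ∘ uarr x }.

Definition Ufun (B : PreCat) (HB : is_cat B) (X : PreCat) (P : PreFunctor X B)
  (U : ConcreteData P) : PreFunctor X (ArrCat HB) :=
  {| fo := fun x => Build_ArrOb (uarr U x) : ArrCat HB;
     fm := fun x y (f : hom x y) =>
       @Build_ArrHom B (Build_ArrOb (uarr U x)) (Build_ArrOb (uarr U y))
         (utop U f) (fm P f) (usq U f) : @hom (ArrCat HB) _ _ |}.

Definition is_concrete_fibration (B : PreCat) (HB : is_cat B) (X : PreCat)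
  (P : PreFunctor X B) : Prop :=
  is_fibration P /\
  exists U : ConcreteData P,
    is_functor (Ufun HB U) /\ faithful (Ufun HB U) /\
    (forall (x y : X) (f : hom x y),
        cartesian P f -> cartesian (codF HB) (fm (Ufun HB U) f)).

Section Fam.
Variables (B : PreCat) (HB : is_cat B) (C : InternalCat B).

Record FamOb := { fI : B; fX : hom fI (C0 C) }.
Record FamHom (A A' : FamOb) := {
  fu : hom (fI A) (fI A');
  ff : hom (fI A) (C1 C);
  fdom : d0 C ∘ ff = fX A;
  fcod : d1 C ∘ ff = fX A' ∘ fu }.

Lemma fam_pair_ok (A1 A2 A3 : FamOb) (g : FamHom A2 A3) (f : FamHom A1 A2) :
  d0 C ∘ (ff g ∘ fu f) = d1 C ∘ ff f.
Proof. rewrite (cat_assoc HB), (fdom g), (fcod f). reflexivity. Qed.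

Definition fam_cf (A1 A2 A3 : FamOb) (g : FamHom A2 A3) (f : FamHom A1 A2)
  : hom (fI A1) (C1 C) :=
  icomp C ∘ pb_pair (C2 C) (fam_pair_ok g f).

Lemma fam_comp_dom (A1 A2 A3 : FamOb) (g : FamHom A2 A3) (f : FamHom A1 A2) :
  d0 C ∘ fam_cf g f = fX A1.
Proof.
  unfold fam_cf.
  rewrite (cat_assoc HB), (icomp_d0 C), <- (cat_assoc HB), pb_pair2, (fdom f).
  reflexivity.
Qed.

Lemma fam_comp_cod (A1 A2 A3 : FamOb) (g : FamHom A2 A3) (f : FamHom A1 A2) :
  d1 C ∘ fam_cf g f = fX A3 ∘ (fu g ∘ fu f).
Proof.
  unfold fam_cf.
  rewrite (cat_assoc HB), (icomp_d1 C), <- (cat_assoc HB), pb_pair1,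
    (cat_assoc HB), (fcod g), <- (cat_assoc HB).
  reflexivity.
Qed.

Lemma fam_id_dom (A : FamOb) : d0 C ∘ (iid C ∘ fX A) = fX A.
Proof. rewrite (cat_assoc HB), (iid_d0 C), (cat_idl HB). reflexivity. Qed.

Lemma fam_id_cod (A : FamOb) : d1 C ∘ (iid C ∘ fX A) = fX A ∘ idm (fI A).
Proof.
  rewrite (cat_assoc HB), (iid_d1 C), (cat_idl HB), (cat_idr HB). reflexivity.
Qed.

Definition Fam : PreCat :=
  {| ob := FamOb; hom := FamHom;
     comp := fun a b c g f => Build_FamHom (fam_comp_dom g f) (fam_comp_cod g f);
     idm := fun a => Build_FamHom (fam_id_dom a) (fam_id_cod a) |}.

Definition proj : PreFunctor Fam B :=
  {| fo := fun A : Fam => fI A; fm := fun a b (f : hom a b) => fu f |}.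
End Fam.

(* For x = (I, X), the pullback |x| of X along d1 is the object of pairs
   (i, a) with a an arrow of C into X i, and a generalized element A -> |x| is
   the same thing as a Fam(C)-morphism into x from a family indexed by A (the
   family being read off as d0 of the arrows).  So |f| is postcomposition with
   f: functoriality is associativity and unitality of Fam(C), faithfulness
   comes from evaluating at the identity arrows, and for a cartesian f the
   unique factorization through f is exactly the pullback property of the
   square |x| -> |y| over I -> J. *)

From Stdlib Require Import ProofIrrelevance ClassicalEpsilon.
Set Implicit Arguments.
Unset Strict Implicit.

Lemma pb_pair_uniq (B : PreCat) (x y z : B) (f : hom x z) (g : hom y z)
  (P : Pullback f g) (w : B) (a : hom w x) (b : hom w y) (e : f ∘ a = g ∘ b)
  (k : hom w P) : pb1 P ∘ k = a -> pb2 P ∘ k = b -> k = pb_pair P e.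
Proof. now intros H1 H2; apply pb_uniq; rewrite ?pb_pair1, ?pb_pair2. Qed.

Lemma ArrHom_eq (B : PreCat) (a b : ArrOb B) (f g : ArrHom a b) :
  atop f = atop g -> abot f = abot g -> f = g.
Proof.
  destruct f as [t1 b1 p1], g as [t2 b2 p2]; simpl; intros -> ->.
  now rewrite (proof_irrelevance _ p1 p2).
Qed.

Section Fam.
Variables (B : PreCat) (HB : is_cat B) (C : InternalCat B).

Lemma FamHom_eq (A A' : FamOb C) (f g : FamHom A A') :
  fu f = fu g -> ff f = ff g -> f = g.
Proof.
  destruct f as [u1 f1 p1 q1], g as [u2 f2 p2 q2]; simpl; intros -> ->.
  now rewrite (proof_irrelevance _ p1 p2), (proof_irrelevance _ q1 q2).
Qed.

Lemma fam_cf_unit_l (A1 A2 A3 : FamOb C) (g : FamHom A2 A3) (f : FamHom A1 A2) :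
  ff g = iid C ∘ fX A2 -> fam_cf HB g f = ff f.
Proof.
  intro Hg; unfold fam_cf; rewrite icomp_unit_l, pb_pair2; [reflexivity|].
  now rewrite pb_pair1, pb_pair2, Hg, (fcod f), (cat_assoc HB).
Qed.

Lemma fam_cf_idr (A1 A2 : FamOb C) (g : FamHom A1 A2) :
  fam_cf HB g (idm (p := Fam HB C) A1) = ff g.
Proof.
  unfold fam_cf; rewrite icomp_unit_r, pb_pair1; [apply (cat_idr HB)|].
  now rewrite pb_pair1, pb_pair2, (cat_idr HB), (fdom g).
Qed.

Lemma fam_cf_assoc (A1 A2 A3 A4 : Fam HB C)
  (h : hom A3 A4) (g : hom A2 A3) (f : hom A1 A2) :
  fam_cf HB h (g ∘ f) = fam_cf HB (h ∘ g) f.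
Proof.
  symmetry; unfold fam_cf.
  apply (icomp_assoc (k1 := pb_pair (C2 C) (fam_pair_ok HB h g) ∘ fu f)
                     (k3 := pb_pair (C2 C) (fam_pair_ok HB g f))).
  - now rewrite (cat_assoc HB), pb_pair2, pb_pair1.
  - now rewrite pb_pair1, (cat_assoc HB).
  - now rewrite !pb_pair2.
  - rewrite pb_pair1, (cat_assoc HB), pb_pair1; simpl; now rewrite (cat_assoc HB).
  - now rewrite pb_pair2.
Qed.

Lemma Fam_is_cat : is_cat (Fam HB C).
Proof.
  split.
  - intros a b c d f g h; apply FamHom_eq; simpl.
    + apply (cat_assoc HB).
    + apply fam_cf_assoc.
  - intros a b f; apply FamHom_eq; simpl.
    + apply (cat_idl HB).
    + now apply fam_cf_unit_l.
  - intros a b f; apply FamHom_eq; simpl.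
    + apply (cat_idr HB).
    + apply fam_cf_idr.
Qed.

Lemma proj_is_functor : is_functor (proj HB C).
Proof. now split. Qed.

Lemma fam_reindex_dom (I : B) (y : FamOb C) (u : hom I (fI y)) :
  d0 C ∘ (iid C ∘ (fX y ∘ u)) = fX y ∘ u.
Proof. now rewrite (cat_assoc HB), (iid_d0 C), (cat_idl HB). Qed.

Lemma fam_reindex_cod (I : B) (y : FamOb C) (u : hom I (fI y)) :
  d1 C ∘ (iid C ∘ (fX y ∘ u)) = fX y ∘ u.
Proof. now rewrite (cat_assoc HB), (iid_d1 C), (cat_idl HB). Qed.

Definition fam_reindex (I : B) (y : FamOb C) (u : hom I (fI y)) :
  FamHom {| fI := I; fX := fX y ∘ u |} y :=
  Build_FamHom (A := {| fI := I; fX := fX y ∘ u |}) (A' := y)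
    (fam_reindex_dom u) (fam_reindex_cod u).

Lemma fam_reindex_cartesian (I : B) (y : FamOb C) (u : hom I (fI y)) :
  cartesian (proj HB C) (fam_reindex u : hom (p := Fam HB C) _ y).
Proof.
  intros z g w Hw; simpl in Hw.
  assert (Hcod : d1 C ∘ ff g = (fX y ∘ u) ∘ w)
    by now rewrite (fcod g), Hw, (cat_assoc HB).
  exists (Build_FamHom (A' := {| fI := I; fX := fX y ∘ u |}) (fdom g) Hcod : hom (p := Fam HB C) _ _).
  split; [split|].
  - apply FamHom_eq; [symmetry; exact Hw|]; simpl.
    now rewrite fam_cf_unit_l.
  - reflexivity.
  - intros h Hh Hhw; apply FamHom_eq; [exact Hhw|]; simpl.
    now rewrite <- Hh; symmetry; apply fam_cf_unit_l.
Qed.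

Lemma proj_is_fibration : is_fibration (proj HB C).
Proof.
  split; [apply proj_is_functor|].
  intros y I u.
  exists {| fI := I; fX := fX y ∘ u |}, (fam_reindex u), eq_refl.
  split; [apply fam_reindex_cartesian | symmetry; apply (cat_idr HB)].
Qed.

End Fam.

Definition is_pullback_square (B : PreCat) (X Y I J : B)
  (p : hom X I) (q : hom Y J) (t : hom X Y) (b : hom I J) : Prop :=
  forall (A : B) (s : hom A I) (t' : hom A Y), q ∘ t' = b ∘ s ->
    exists T : hom A X, (p ∘ T = s /\ t ∘ T = t') /\
      (forall T' : hom A X, p ∘ T' = s -> t ∘ T' = t' -> T' = T).

Lemma pullback_square_cartesian (B : PreCat) (HB : is_cat B) (a b : ArrCat HB)
  (phi : hom a b) :
  is_pullback_square (aarr a) (aarr b) (atop phi) (abot phi) ->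
  cartesian (codF HB) phi.
Proof.
  intros Hpb z g w Hw; simpl in Hw.
  assert (Hsq : aarr b ∘ atop g = abot phi ∘ (w ∘ aarr z))
    by now rewrite (asq g), Hw, (cat_assoc HB).
  destruct (Hpb _ _ _ Hsq) as [T [[HT1 HT2] HTuniq]].
  exists (Build_ArrHom HT1 : hom (p := ArrCat HB) z a).
  split; [split|].
  - now apply ArrHom_eq.
  - reflexivity.
  - intros h Hh Hhw; apply ArrHom_eq; [|exact Hhw]; simpl.
    apply HTuniq.
    + now rewrite (asq h), <- Hhw.
    + now rewrite <- Hh.
Qed.

Section Concrete.
Variables (B : PreCat) (HB : is_cat B) (C : InternalCat B).
Variable PB : forall {I : B} (X : hom I (C0 C)), Pullback X (d1 C).

Local Notation tot x := (PB (fX x)).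

Definition fam_tot (x : FamOb C) : FamOb C :=
  {| fI := tot x; fX := d0 C ∘ pb2 (tot x) |}.

Definition fam_generic (x : FamOb C) : FamHom (fam_tot x) x :=
  Build_FamHom (A := fam_tot x) (fu := pb1 (tot x)) eq_refl (eq_sym (pb_comm _)).

Definition classify (z x : FamOb C) (k : FamHom z x) : hom (fI z) (tot x) :=
  pb_pair (tot x) (eq_sym (fcod k)).

Lemma classify1 (z x : FamOb C) (k : FamHom z x) :
  pb1 (tot x) ∘ classify k = fu k.
Proof. apply pb_pair1. Qed.

Lemma classify2 (z x : FamOb C) (k : FamHom z x) :
  pb2 (tot x) ∘ classify k = ff k.
Proof. apply pb_pair2. Qed.

Lemma classify_inj (z x : FamOb C) (k k' : FamHom z x) :
  classify k = classify k' -> k = k'.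
Proof.
  intro Hk; apply FamHom_eq.
  - now rewrite <- classify1, Hk, classify1.
  - now rewrite <- classify2, Hk, classify2.
Qed.

Lemma fam_point_cod (x : FamOb C) (A : B) (T : hom A (tot x)) :
  d1 C ∘ (pb2 (tot x) ∘ T) = fX x ∘ (pb1 (tot x) ∘ T).
Proof. now rewrite !(cat_assoc HB), pb_comm. Qed.

Definition fam_point (z x : FamOb C) (T : hom (fI z) (tot x))
  (e : d0 C ∘ (pb2 (tot x) ∘ T) = fX z) : FamHom z x :=
  Build_FamHom e (fam_point_cod T).
Arguments fam_point [z x] T e.

Lemma classify_point (z x : FamOb C) (T : hom (fI z) (tot x))
  (e : d0 C ∘ (pb2 (tot x) ∘ T) = fX z) : classify (fam_point T e) = T.
Proof. symmetry; now apply pb_pair_uniq. Qed.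

Definition fam_utop (x y : Fam HB C) (f : hom x y) : hom (tot x) (tot y) :=
  classify (f ∘ fam_generic x).

Lemma fam_utop1 (x y : Fam HB C) (f : hom x y) :
  pb1 (tot y) ∘ fam_utop f = fu f ∘ pb1 (tot x).
Proof. exact (classify1 (f ∘ fam_generic x)). Qed.

Lemma fam_utop2 (x y : Fam HB C) (f : hom x y) :
  pb2 (tot y) ∘ fam_utop f = fam_cf HB f (fam_generic x).
Proof. exact (classify2 (f ∘ fam_generic x)). Qed.

Lemma fam_utop_d0 (x y : Fam HB C) (f : hom x y) :
  (d0 C ∘ pb2 (tot y)) ∘ fam_utop f = d0 C ∘ pb2 (tot x).
Proof.
  rewrite <- (cat_assoc HB), fam_utop2.
  exact (fam_comp_dom HB f (fam_generic x)).
Qed.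

Lemma fam_cf_generic_classify (x y z : Fam HB C) (f : hom x y) (k : hom z x) :
  fam_cf HB f (fam_generic x) ∘ classify k = fam_cf HB f k.
Proof.
  unfold fam_cf; rewrite <- (cat_assoc HB); f_equal.
  apply pb_pair_uniq.
  - rewrite (cat_assoc HB), pb_pair1, <- (cat_assoc HB); simpl.
    now rewrite classify1.
  - rewrite (cat_assoc HB), pb_pair2; simpl.
    now rewrite classify2.
Qed.

Lemma classify_comp (x y z : Fam HB C) (f : hom x y) (k : hom z x) :
  classify (f ∘ k) = fam_utop f ∘ classify k.
Proof.
  symmetry; apply pb_pair_uniq.
  - now rewrite (cat_assoc HB), fam_utop1, <- (cat_assoc HB), classify1.
  - rewrite (cat_assoc HB), fam_utop2; exact (fam_cf_generic_classify f k).
Qed.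

Lemma fam_utop_comp (x y z : Fam HB C) (g : hom y z) (f : hom x y) :
  fam_utop (g ∘ f) = fam_utop g ∘ fam_utop f.
Proof.
  unfold fam_utop at 1.
  rewrite <- (cat_assoc (Fam_is_cat HB C)).
  exact (classify_comp g (f ∘ fam_generic x)).
Qed.

Lemma fam_utop_id (x : Fam HB C) : fam_utop (idm x) = idm (tot x).
Proof.
  unfold fam_utop; rewrite (cat_idl (Fam_is_cat HB C)).
  symmetry; apply pb_pair_uniq; apply (cat_idr HB).
Qed.

Lemma fam_utop_inj (x y : Fam HB C) (f g : hom x y) :
  fam_utop f = fam_utop g -> f = g.
Proof.
  intro Hfg; apply classify_inj.
  rewrite <- (cat_idr (Fam_is_cat HB C) f), <- (cat_idr (Fam_is_cat HB C) g).
  now rewrite !classify_comp, Hfg.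
Qed.

Lemma fam_utop_pullback (x y : Fam HB C) (f : hom x y) :
  cartesian (proj HB C) f ->
  is_pullback_square (pb1 (tot x)) (pb1 (tot y)) (fam_utop f) (fu f).
Proof.
  intros Hf A s t Hst.
  set (z := {| fI := A; fX := d0 C ∘ (pb2 (tot y) ∘ t) |} : Fam HB C).
  set (g := fam_point (z := z) t eq_refl : hom z y).
  destruct (Hf z g s Hst) as [h [[Hfh Hhs] Hh_uniq]].
  (* makes the domains syntactically equal, so that rewriting with the
     [classify] lemmas applies *)
  change A with (fI z).
  exists (classify h); split; [split|].
  - now rewrite classify1.
  - now rewrite <- classify_comp, Hfh; apply classify_point.
  - intros T HTs HTt.
    assert (e : d0 C ∘ (pb2 (tot x) ∘ T) = fX z).
    { simpl; now rewrite <- HTt, !(cat_assoc HB), fam_utop_d0. }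
    rewrite <- (classify_point e); f_equal; apply Hh_uniq; [|exact HTs].
    apply classify_inj.
    rewrite classify_comp, classify_point; unfold g; now rewrite classify_point.
Qed.

Definition fam_concrete : ConcreteData (proj HB C) :=
  Build_ConcreteData (P := proj HB C) (carrier := fun x => tot x)
    (uarr := fun x => pb1 (tot x)) (utop := fun x y f => fam_utop f)
    (fun x y f => fam_utop1 f).

Lemma fam_concrete_functor : is_functor (Ufun HB fam_concrete).
Proof.
  split.
  - intros x y z g f; apply ArrHom_eq; [apply fam_utop_comp | reflexivity].
  - intros x; apply ArrHom_eq; [apply fam_utop_id | reflexivity].
Qed.

Lemma fam_concrete_faithful : faithful (Ufun HB fam_concrete).
Proof. intros x y f g Hfg; apply fam_utop_inj, (f_equal (@atop _ _ _) Hfg). Qed.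

Lemma fam_concrete_cartesian (x y : Fam HB C) (f : hom x y) :
  cartesian (proj HB C) f -> cartesian (codF HB) (fm (Ufun HB fam_concrete) f).
Proof. intro Hf; apply pullback_square_cartesian, fam_utop_pullback, Hf. Qed.

End Concrete.

Definition choose_pullback (B : PreCat) (Hlim : has_finite_limits B)
  (x y z : B) (f : hom x z) (g : hom y z) : Pullback f g :=
  epsilon (proj2 Hlim _ _ _ f g) (fun _ => True).

Theorem proposition21 (B : PreCat) (HB : is_cat B) (Hlim : has_finite_limits B)
  (C : InternalCat B) :
  is_concrete_fibration HB (proj HB C).
Proof.
  set (U := fam_concrete HB (fun I X => choose_pullback Hlim X (d1 C))).
  split; [apply proj_is_fibration|].
  exists U; split; [|split].
  - apply fam_concrete_functor.
  - apply fam_concrete_faithful.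
  - apply fam_concrete_cartesian.
Qed.
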